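(* Let $G$ be a finite simple graph, $s\ge1$, and let $e_1,\dots,e_s$ and $f_1,\dots,f_s$ be two sequences of edges of $G$ (repetitions allowed) with $f_1\cdots f_s=e_1\cdots e_s$ as monomials. If vertices $u,v$ (possibly equal) are even-connected with respect to $e_1\cdots e_s$, then $u$ and $v$ are even-connected with respect to $f_1\cdots f_s$.
   Context: Edges $xy$ of $G$ are identified with monomials $xy$ in the polynomial ring on the vertices. Even-connection: vertices $u,v$ (possibly equal) are even-connected with respect to the sequence $e_1,\dots,e_s$ if there is a sequence of vertices $p_0,\dots,p_{2k+1}$, $k\geq1$ (vertices may repeat), with (1) $p_0=u$, $p_{2k+1}=v$; (2) for all $0\le l\le k-1$, $p_{2l+1}p_{2l+2}=e_i$ for some $i$; (3) for every $i$, $|\{l\ge0 : p_{2l+1}p_{2l+2}=e_i\}|\le|\{j: e_j=e_i\}|$; (4) for all $0\le r\le 2k$, $p_rp_{r+1}$ is an edge of $G$. *)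

From mathcomp Require Import all_boot.
Set Implicit Arguments. Unset Strict Implicit. Unset Printing Implicit Defensive.

Definition simple_graph (T : finType) (g : rel T) : Prop :=
  symmetric g /\ irreflexive g.

(* An edge is given by its two endpoints (x, y); it is identified with the
   monomial x*y, i.e. with the multiset {x, y}. *)
Definition edge_mono_eq (T : eqType) (a b : T * T) : bool :=
  perm_eq [:: a.1; a.2] [:: b.1; b.2].

(* The monomial e_1 ... e_s corresponds to the multiset of all endpoints. *)
Definition mono_of (T : eqType) (es : seq (T * T)) : seq T :=
  flatten [seq [:: x.1; x.2] | x <- es].

Definition mono_eq (T : eqType) (es fs : seq (T * T)) : bool :=
  perm_eq (mono_of es) (mono_of fs).

(* Even-connection of u and v with respect to the sequence es = e_1,...,e_s
   (indices shifted to start at 0 in Rocq: p = p_0, ..., p_{2k+1}). *)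
Definition even_connected (T : finType) (g : rel T) (es : seq (T * T))
    (u v : T) : Prop :=
  exists (k : nat) (p : seq T),
    1 <= k /\ size p = (2 * k + 2)%N /\
        nth u p 0 = u /\ nth u p (2 * k + 1) = v /\
        (forall l, l < k ->
           has (edge_mono_eq (nth u p (2 * l + 1), nth u p (2 * l + 2))) es) /\
        (forall i, i < size es ->
           count (fun l => edge_mono_eq (nth u p (2 * l + 1), nth u p (2 * l + 2))
                                        (nth (u, u) es i)) (iota 0 k)
           <= count (edge_mono_eq (nth (u, u) es i)) es) /\
        (forall r, r < 2 * k + 1 -> g (nth u p r) (nth u p r.+1)).

From mathcomp Require Import all_boot zify.
Set Implicit Arguments. Unset Strict Implicit. Unset Printing Implicit Defensive.

(* An even-connecting walk u, p_1, ..., p_2k, v is described by its edges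
   p_{2l+1} p_{2l+2}, a submultiset Q of e_1 ... e_s, and its remaining edges
   p_{2l} p_{2l+1}, whose vertex multiset is u + v + (vertices of Q).  Hence, writing
   e_1 ... e_s = Q + R, these remaining edges together with R have vertex multiset
   u + v + (vertices of f_1 ... f_s).  Such an identity H = u + v + F always yields a
   walk from u to v alternating between edges of H and F: leave u along an edge uw of
   H; if w <> v, then w must occur in F, so leave w along an edge wz of F, and
   continue from z with the smaller identity H - uw = z + v + (F - wz).  To keep the
   new walk nonempty, it is started with an f-edge at p_1. *)

Section EdgeMultisets.
Variable T : eqType.
Implicit Types (x y : T) (e q : T * T) (P Q E H F : seq (T * T)).
Local Notation edge_eq := (@edge_mono_eq T).

Lemma edge_mono_eq_refl e : edge_eq e e.
Proof. exact: perm_refl. Qed.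

Lemma edge_mono_eq_sym e q : edge_eq e q = edge_eq q e.
Proof. exact: perm_sym. Qed.

Lemma edge_mono_eq_swap x y : edge_eq (x, y) (y, x).
Proof. by rewrite /edge_mono_eq (perm_rcons y [:: x]). Qed.

Lemma edge_mono_eql e q : edge_eq e q -> edge_eq e =1 edge_eq q.
Proof. by move=> /permPl eq_eq a; apply: eq_eq. Qed.

Lemma edge_mono_eq_cases e q : edge_eq e q -> e = q \/ e = (q.2, q.1).
Proof.
case: e q => [x1 x2] [y1 y2]; rewrite /edge_mono_eq /= => eq_xy.
have := perm_mem eq_xy x1; rewrite !inE eqxx /= => /esym/orP[] /eqP eq_x1.
- left; move: eq_xy; rewrite eq_x1 perm_cons.
  by move=> /perm_small_eq-/(_ isT) [->].
- right; move: eq_xy; rewrite perm_sym -(perm_rcons y1 [:: y2]) eq_x1 perm_cons.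
  by move=> /perm_small_eq-/(_ isT) [<-].
Qed.

Lemma mono_of_cons e P : mono_of (e :: P) = e.1 :: e.2 :: mono_of P.
Proof. by []. Qed.

Lemma mono_of_cat P Q : mono_of (P ++ Q) = mono_of P ++ mono_of Q.
Proof. by rewrite /mono_of map_cat flatten_cat. Qed.

Lemma size_mono_of P : size (mono_of P) = 2 * size P.
Proof. by elim: P => //= e P IH; rewrite IH mulnS. Qed.

Lemma perm_mono_of P Q : perm_eq P Q -> perm_eq (mono_of P) (mono_of Q).
Proof. by move=> eqPQ; apply/perm_flatten/perm_map. Qed.

Lemma mem_mono_of x H :
  x \in mono_of H -> exists y, exists2 h, h \in H & edge_eq (x, y) h.
Proof.
case/flattenP=> _ /mapP[[h1 h2] hH ->]; rewrite !inE => /orP[] /eqP->.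
- by exists h2, (h1, h2); last exact: edge_mono_eq_refl.
- by exists h1, (h1, h2); last exact: edge_mono_eq_swap.
Qed.

Lemma perm_mono_of_rem e h H : h \in H -> edge_eq e h ->
  perm_eq (mono_of H) (e.1 :: e.2 :: mono_of (rem h H)).
Proof.
move=> hH eq_eh; apply: perm_trans (perm_mono_of (perm_to_rem hH)) _.
change (perm_eq ([:: h.1; h.2] ++ mono_of (rem h H))
                ([:: e.1; e.2] ++ mono_of (rem h H))).
by rewrite perm_cat2r perm_sym.
Qed.

Definition sub_edges P E :=
  forall e, count (edge_eq e) P <= count (edge_eq e) E.

Lemma sub_edges_nil E : sub_edges [::] E.
Proof. by []. Qed.

Lemma sub_edges_cons_rem q e Q E : e \in E -> edge_eq q e ->
  sub_edges (q :: Q) E <-> sub_edges Q (rem e E).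
Proof.
move=> eE eq_qe.
have count_E a : count (edge_eq a) E = edge_eq a e + count (edge_eq a) (rem e E).
  by move/permP: (perm_to_rem eE) => ->.
have eq_aq a : edge_eq a q = edge_eq a e.
  by rewrite edge_mono_eq_sym (edge_mono_eql eq_qe) edge_mono_eq_sym.
split=> subQ a; have := subQ a; rewrite /= count_E eq_aq; lia.
Qed.

Lemma sub_edgesP P E :
  sub_edges P E <->
  all (fun e => count (edge_eq^~ e) P <= count (edge_eq e) E) E /\
  all (fun q => has (edge_eq q) E) P.
Proof.
have count_sym e : count (edge_eq^~ e) P = count (edge_eq e) P.
  by apply: eq_count => q; rewrite edge_mono_eq_sym.
split=> [subP | [/allP countE /allP hasE]].
  split; apply/allP; first by move=> e _; rewrite count_sym.
  move=> q qP; rewrite has_count (leq_trans _ (subP q)) // -has_count.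
  by apply/hasP; exists q; last exact: edge_mono_eq_refl.
move=> a; have [/hasP[e eE eq_ae] | /hasPn not_aE] := boolP (has (edge_eq a) E).
  by rewrite !(eq_count (edge_mono_eql eq_ae)) -count_sym countE.
rewrite (eq_in_count (a2 := pred0)) ?count_pred0 // => q qP /=.
apply/negP=> eq_aq; have /hasP[e eE eq_qe] := hasE q qP.
by have := not_aE e eE; rewrite (edge_mono_eql eq_aq) eq_qe.
Qed.

Lemma sub_edges_complement Q E : sub_edges Q E ->
  exists2 E', {subset E' <= E} & perm_eq (mono_of E) (mono_of Q ++ mono_of E').
Proof.
elim: Q E => [|q Q IH] E subQ; first by exists E.
have /hasP[e eE eq_qe] : has (edge_eq q) E.
  by rewrite has_count (leq_trans _ (subQ q)) //= edge_mono_eq_refl.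
have [E' sub_E' eq_E'] := IH _ ((sub_edges_cons_rem _ eE eq_qe).1 subQ).
exists E' => [x /sub_E' /mem_rem // | ].
apply: perm_trans (perm_mono_of_rem eE eq_qe) _.
by rewrite perm_cons perm_cons.
Qed.

(* For the walk x, p_1, ..., p_2k, y whose edges p_{2l+1} p_{2l+2} are listed
   in P, the remaining edges p_{2l} p_{2l+1}. *)
Fixpoint even_edges x P y : seq (T * T) :=
  if P is e :: P' then (x, e.1) :: even_edges e.2 P' y else [:: (x, y)].

Lemma perm_mono_of_even_edges x P y :
  perm_eq (mono_of (even_edges x P y)) (x :: y :: mono_of P).
Proof.
elim: P x => [|e P IH] x /=; first exact: perm_refl.
rewrite perm_cons; apply: (@perm_trans _ [:: e.1, e.2, y & mono_of P]).
  by rewrite perm_cons; apply: IH.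
by apply/permPl; apply: (perm_catCA [:: e.1; e.2] [:: y]).
Qed.

Lemma alternating_walk H F x y :
  perm_eq (mono_of H) (x :: y :: mono_of F) ->
  exists P, sub_edges P F /\ sub_edges (even_edges x P y) H.
Proof.
have [n ltHn] := ubnP (size H); elim: n => // n IH in H F x ltHn *.
move=> eq_H; have /mem_mono_of[w [h hH eq_xw]] : x \in mono_of H.
  by rewrite (perm_mem eq_H) mem_head.
have eq_rem : perm_eq (w :: mono_of (rem h H)) (y :: mono_of F).
  by rewrite -(perm_cons x) -(permPl (perm_mono_of_rem hH eq_xw)).
case: (eqVneq w y) => [<- | neq_wy].
  exists [::]; split; first exact: sub_edges_nil.
  exact: (sub_edges_cons_rem _ hH eq_xw).2 (sub_edges_nil _).
have /mem_mono_of[z [f fF eq_wz]] : w \in mono_of F.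
  by move: (perm_mem eq_rem w); rewrite mem_head inE (negPf neq_wy) => /esym.
have eq_rem' : perm_eq (mono_of (rem h H)) (z :: y :: mono_of (rem f F)).
  rewrite -(perm_cons w); apply: perm_trans eq_rem _.
  rewrite perm_sym (perm_catCA [:: w; z] [:: y]) perm_cons perm_sym.
  exact: perm_mono_of_rem fF eq_wz.
have [|P [subPF subPH]] := IH _ _ z _ eq_rem'.
  by rewrite size_rem // -ltnS prednK // -has_predT; apply/hasP; exists h.
exists ((w, z) :: P); split; first exact: (sub_edges_cons_rem _ fF eq_wz).2 subPF.
exact: (sub_edges_cons_rem _ hH eq_xw).2 subPH.
Qed.

Fixpoint pairs (s : seq T) : seq (T * T) :=
  if s is x :: y :: s' then (x, y) :: pairs s' else [::].

Lemma mono_of_pairs k (s : seq T) : size s = 2 * k -> mono_of (pairs s) = s.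
Proof.
elim: k s => [|k IH] [|x [|y s]] //=; rewrite mulnS add2n // => -[size_s].
by rewrite mono_of_cons IH.
Qed.

Lemma nth_walk x0 x P y l : l < size P ->
  (nth x0 (x :: mono_of P ++ [:: y]) (2 * l + 1),
   nth x0 (x :: mono_of P ++ [:: y]) (2 * l + 2)) = nth (x0, x0) P l.
Proof.
elim: P x l => [|[a b] P IH] x [|l] // lt_lP.
have -> : 2 * l.+1 + 1 = (2 * l + 1).+2 by lia.
have -> : 2 * l.+1 + 2 = (2 * l + 2).+2 by lia.
exact: IH.
Qed.

Lemma count_walk_pairs (a : pred (T * T)) x0 x P y :
  count (fun l => a (nth x0 (x :: mono_of P ++ [:: y]) (2 * l + 1),
                     nth x0 (x :: mono_of P ++ [:: y]) (2 * l + 2)))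
        (iota 0 (size P)) = count a P.
Proof.
rewrite (eq_in_count (a2 := preim (nth (x0, x0) P) a)); last first.
  by move=> l; rewrite mem_iota /= => lt_lP; rewrite nth_walk.
by rewrite -count_map -/(mkseq _ _) mkseq_nth.
Qed.

End EdgeMultisets.

Section Walks.
Variables (T : eqType) (g : rel T).
Local Notation edge := (fun e : T * T => g e.1 e.2).

Lemma path_walk x P y :
  path g x (mono_of P ++ [:: y]) = all edge P && all edge (even_edges x P y).
Proof.
elim: P x => [|e P IH] x /=; first by rewrite andbT.
by rewrite IH -!andbA; bool_congr.
Qed.

Hypothesis g_sym : symmetric g.

Lemma sub_edges_all P E : sub_edges P E -> all edge E -> all edge P.
Proof.
move=> /sub_edgesP[_ /allP hasE] /allP edgeE.
apply/allP => q /hasE /hasP[e /edgeE ge eq_qe].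
by case: (edge_mono_eq_cases eq_qe) => ->; rewrite // g_sym.
Qed.

End Walks.

Lemma ends_take_behead (T : Type) (x0 : T) n (p : seq T) : size p = n.+2 ->
  p = nth x0 p 0 :: take n (behead p) ++ [:: nth x0 p n.+1].
Proof.
by case: p => // x q /= [size_q]; rewrite cats1 -take_nth ?size_q // -size_q take_size.
Qed.

Section EvenConnection.
Variables (T : finType) (g : rel T) (es : seq (T * T)) (u v : T).

Lemma even_connectedP :
  even_connected g es u v <->
  exists2 P, 0 < size P & sub_edges P es /\ path g u (mono_of P ++ [:: v]).
Proof.
split=> [|[P P_gt0 [sub_P g_P]]].
  move=> [k [p [k_gt0 [size_p [p0 [pk [has_es [count_es g_p]]]]]]]].
  set s := take (2 * k) (behead p).
  have size_s : size s = 2 * k by rewrite size_takel // size_behead size_p addn2.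
  have size_P : size (pairs s) = k.
    apply/eqP; rewrite -(eqn_pmul2l (isT : 0 < 2)) -size_mono_of.
    by rewrite (mono_of_pairs size_s) size_s.
  have p_walk : p = u :: mono_of (pairs s) ++ [:: v].
    rewrite (mono_of_pairs size_s) -pk -{1}p0 addn1.
    by apply: ends_take_behead; rewrite size_p addn2.
  move: has_es count_es g_p; rewrite p_walk -size_P => has_es count_es g_p.
  exists (pairs s); first by rewrite size_P.
  split; last by apply/(pathP u) => i; rewrite size_cat size_mono_of; apply: g_p.
  apply/sub_edgesP; split; apply/(all_nthP (u, u)) => i lt_i.
    by move: (count_es i lt_i); rewrite (count_walk_pairs ((@edge_mono_eq T)^~ _)).
  by move: (has_es i lt_i); rewrite nth_walk.
move/sub_edgesP: sub_P => [/(all_nthP (u, u)) count_es /(all_nthP (u, u)) has_es].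
exists (size P), (u :: mono_of P ++ [:: v]); split=> //.
split; first by rewrite /= size_cat size_mono_of addn1 addn2.
split=> //; split; first by rewrite addn1 /= nth_cat size_mono_of ltnn subnn.
split; first by move=> l lt_l; rewrite nth_walk //; apply: has_es.
split.
  move=> i lt_i; rewrite (count_walk_pairs ((@edge_mono_eq T)^~ _)).
  exact: count_es.
by move/(pathP u): g_P; rewrite size_cat size_mono_of addn1.
Qed.

End EvenConnection.

Theorem theorem6p6 (T : finType) (g : rel T) (es fs : seq (T * T)) (u v : T) :
  simple_graph g ->
  1 <= size es ->
  size fs = size es ->
  all (fun x => g x.1 x.2) es ->
  all (fun x => g x.1 x.2) fs ->
  mono_eq fs es ->
  even_connected g es u v ->
  even_connected g fs u v.
Proof.
move=> [g_sym _] _ _ g_es g_fs eq_fs_es /even_connectedP[[|[a b] P] // _ [sub_P]].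
rewrite path_walk => /andP[_ /= /andP[g_ua g_even]].
have [E' sub_E' eq_es] := sub_edges_complement sub_P.
(* Leaving p_1 = a along an f-edge {a, z} makes the new walk nonempty. *)
have /mem_mono_of[z [f f_fs eq_az]] : a \in mono_of fs.
  by rewrite (perm_mem eq_fs_es) (perm_mem eq_es) mem_head.
have eq_H : perm_eq (mono_of (even_edges b P v ++ E')) (z :: v :: mono_of (rem f fs)).
  have eq_zb : perm_eq (z :: mono_of (rem f fs)) (b :: mono_of P ++ mono_of E').
    rewrite -(perm_cons a) -(permPl (perm_mono_of_rem f_fs eq_az)).
    exact: perm_trans eq_fs_es eq_es.
  rewrite mono_of_cat.
  apply: perm_trans (perm_cat (perm_mono_of_even_edges b P v) (perm_refl _)) _.
  by rewrite /= (perm_catCA [:: b] [:: v]) perm_sym (perm_catCA [:: z] [:: v]) perm_cons.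
have [Q [sub_Q sub_even]] := alternating_walk eq_H.
have g_H : all (fun x => g x.1 x.2) (even_edges b P v ++ E').
  by rewrite all_cat g_even; apply/allP => e /sub_E' e_es; move/allP: g_es; apply.
have sub_aQ : sub_edges ((a, z) :: Q) fs := (sub_edges_cons_rem _ f_fs eq_az).2 sub_Q.
apply/even_connectedP; exists ((a, z) :: Q) => //; split=> //.
rewrite path_walk (sub_edges_all g_sym sub_aQ g_fs) /= g_ua /=.
exact: (sub_edges_all g_sym sub_even g_H).
Qed.
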